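(* Let $r\ge 3$ be an integer, let $\varphi$ be an instance of Exact $r$-SAT, and let $G(\varphi)$ be the graph constructed from $\varphi$ as described in the context. If $\mathrm{wcol}_r(G(\varphi)) \leq 2r-1$, then $\varphi$ has a satisfying assignment.
   Context: Exact $r$-SAT: given a CNF formula $\varphi$ with clauses $c_1,\dots,c_m$ over variables $x_1,\dots,x_n$ such that each clause contains exactly $r$ different variables, decide whether $\varphi$ is satisfiable. An $\ell$-subdivided edge between $a$ and $b$ is an induced path with $\ell$ internal vertices (subdivision vertices) joining $a$ and $b$, whose internal vertices have no other neighbors. Construction of $G(\varphi)$: for each clause $c_i$ create $2r$ vertices $u_i^1,\dots,u_i^{2r}$. For each variable $x_j$ create two vertices $v_j,v'_j$ (for the literals $x_j$ and $\overline{x}_j$) joined by an edge. For each clause $c_i$ containing literal $x_j$, add two $(r-2)$-subdivided edges from $v_j$ to each of $u_i^1,\dots,u_i^{2r}$; for each clause $c_i$ containing $\overline{x}_j$, add two $(r-2)$-subdivided edges from $v'_j$ to each of $u_i^1,\dots,u_i^{2r}$. Weak coloring numbers: for a graph $G=(V,E)$ and a total order $\sigma$ of $V$, a vertex $v\neq u$ is weakly $r$-reachable from $u$ if $u <_\sigma v$ and there is a $u$–$v$ path $P$ of length at most $r$ all of whose vertices other than $u,v$ precede $v$ in $\sigma$; $\mathrm{wreach}_r(u,G_\sigma)$ is the set of such $v$, and $\mathrm{wcol}_r(G)=\min_\sigma\max_u|\mathrm{wreach}_r(u,G_\sigma)|$ over all total orders $\sigma$ of $V$. *)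

From mathcomp Require Import all_boot all_order all_fingroup.
Set Implicit Arguments. Unset Strict Implicit. Unset Printing Implicit Defensive.

(* A literal over variables 'I_n is a pair (j, b): b = true is x_j, b = false is ~x_j. *)
Definition exact_rsat (r n m : nat) (cl : 'I_m -> 'I_r -> 'I_n * bool) : Prop :=
  forall i, injective (fun l => (cl i l).1).

Definition satisfiable (r n m : nat) (cl : 'I_m -> 'I_r -> 'I_n * bool) : Prop :=
  exists a : 'I_n -> bool, forall i : 'I_m, exists l : 'I_r, a (cl i l).1 = (cl i l).2.

(* Vertices:
   inl (inl (i,k))          = u_i^k          (k < 2r)
   inl (inr (j,b))          = v_j (b = true) / v'_j (b = false)
   inr (i,l,k,t,p)          = p-th subdivision vertex (p < r-2) of copy t of the
                              subdivided edge between u_i^k and the vertex of the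
                              literal cl i l. *)
Definition GV (r n m : nat) : finType :=
  ((('I_m * 'I_(2 * r)) + ('I_n * bool)) +
   ('I_m * 'I_r * 'I_(2 * r) * bool * 'I_(r - 2)))%type.

Definition Gadj0 (r n m : nat) (cl : 'I_m -> 'I_r -> 'I_n * bool)
  (x y : GV r n m) : bool :=
  match x, y with
  | inl (inr (j, b)), inl (inr (j', b')) => [&& j == j', b & ~~ b']
  | inr (i, l, k, t, p), inr (i', l', k', t', p') =>
      [&& i == i', l == l', k == k', t == t' & p.+1 == p' :> nat]
  | inr (i, l, k, t, p), inl (inr (j, b)) => (p == 0 :> nat) && (cl i l == (j, b))
  | inr (i, l, k, t, p), inl (inl (i', k')) =>
      [&& p == r - 3 :> nat, i == i' & k == k']
  | _, _ => false
  end.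

Definition Gedge (r n m : nat) (cl : 'I_m -> 'I_r -> 'I_n * bool) : rel (GV r n m) :=
  fun x y => Gadj0 cl x y || Gadj0 cl y x.

(* A total order of V is represented by a permutation s : x <_s y iff
   s x comes before s y in the enumeration of V. *)
Definition ord_lt (V : finType) (s : {perm V}) (x y : V) : bool :=
  (enum_rank (s x) < enum_rank (s y))%N.

Definition wreachable (V : finType) (e : rel V) (r : nat) (s : {perm V}) (u v : V) : bool :=
  [&& u != v, ord_lt s u v &
   [exists k : 'I_r.+1, exists p : k.-tuple V,
      [&& path e u p, last u p == v, uniq (u :: p) &
          all (fun w => ord_lt s w v) (behead (belast u p))]]].

Definition wreach (V : finType) (e : rel V) (r : nat) (s : {perm V}) (u : V) : {set V} :=
  [set v | wreachable e r s u v].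

(* wcol_r(G) = min over total orders s of max_u |wreach_r(u, G_s)| ;
   (#|V| is an upper bound for every value, so it is a neutral start for minn) *)
Definition wcol (V : finType) (e : rel V) (r : nat) : nat :=
  \big[minn/#|V|]_(s : {perm V}) \max_(u : V) #|wreach e r s u|.

From mathcomp Require Import all_boot all_order all_fingroup.
From mathcomp Require Import zify.
Set Implicit Arguments. Unset Strict Implicit. Unset Printing Implicit Defensive.

(* Take an order s realising wcol_r <= 2r - 1 and make x_j true iff v_j comes
   after v'_j in s.  Were a clause c_i violated, each of its literal vertices
   would precede its negation.  Let w be the earliest literal vertex of c_i.
   If every u_i^k comes after w, the latest vertex on the subdivided edge from
   w to u_i^k is weakly r-reachable from w, for each of the 2r values of k.
   Otherwise some u = u_i^k precedes all literal vertices of c_i; for each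
   literal of c_i, the latest vertices of its two subdivided edges towards u
   are weakly r-reachable from u, and if both are the literal vertex itself,
   its negation is reached through it.  Literals of c_i have distinct
   variables, so either way some vertex weakly r-reaches 2r vertices. *)

Lemma leq_card_into (T V : finType) (A : {set V}) (g : T -> V) :
  injective g -> (forall x, g x \in A) -> #|T| <= #|A|.
Proof.
move=> g_inj gA; rewrite -cardsT -(card_imset _ g_inj).
by apply/subset_leq_card/subsetP => _ /imsetP[x _ ->].
Qed.

Lemma path_map_iota (T : Type) (e : rel T) (f : nat -> T) a n :
  (forall p, a <= p < a + n -> e (f p) (f p.+1)) ->
  path e (f a) (map f (iota a.+1 n)).
Proof.
elim: n a => [//|n IHn] a fe /=; apply/andP; split; first by apply: fe; lia.
by apply: IHn => p ?; apply: fe; lia.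
Qed.

Lemma path_map_rev_iota (T : Type) (e : rel T) (f : nat -> T) a n :
  (forall p, a <= p < a + n -> e (f p.+1) (f p)) ->
  path e (f (a + n)) (map f (rev (iota a n))).
Proof.
elim: n => [//|n IHn] fe; rewrite -addn1 iotaD rev_cat /= addn1 addnS.
apply/andP; split; first by apply: fe; lia.
by apply: IHn => p ?; apply: fe; lia.
Qed.

Section WeakReach.
Variables (V : finType) (e : rel V) (r : nat) (s : {perm V}).

Definition ord_rank (x : V) : nat := enum_rank (s x).

Lemma ord_ltE x y : ord_lt s x y = (ord_rank x < ord_rank y).
Proof. by []. Qed.

Lemma ord_rank_inj : injective ord_rank.
Proof. by move=> x y /ord_inj/enum_rank_inj/perm_inj. Qed.

Lemma ord_gtNlt x y : x != y -> ord_lt s y x = ~~ ord_lt s x y.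
Proof.
by move=> xy; rewrite !ord_ltE -leqNgt ltn_neqAle (inj_eq ord_rank_inj) eq_sym xy.
Qed.

Lemma ord_lt_first_cases (I K : finType) (i0 : I) (f : I -> V) (g : K -> V) :
  (forall i k, f i != g k) ->
  (exists i, forall k, ord_lt s (f i) (g k)) \/
  (exists k, forall i, ord_lt s (g k) (f i)).
Proof.
move=> fg; have [i _ i_min] := @arg_minnP _ i0 xpredT (ord_rank \o f) isT.
case: (boolP [exists k, ord_lt s (g k) (f i)]) => [/existsP[k gk]|/existsPn no_k].
  right; exists k => i'; rewrite ord_ltE in gk; rewrite ord_ltE.
  by have /= := i_min i' isT; lia.
by left; exists i => k; rewrite ord_gtNlt 1?eq_sym ?fg ?no_k.
Qed.

Lemma mem_wreach u q w :
  path e u (rcons q w) -> uniq (u :: rcons q w) -> size q < r ->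
  ord_lt s u w -> all (ord_lt s ^~ w) q -> w \in wreach e r s u.
Proof.
move=> e_uqw uniq_uqw size_q uw qw.
have uNw : u != w.
  by apply: contraTneq uniq_uqw => ->; rewrite /= mem_rcons mem_head.
have size_qw : size (rcons q w) < r.+1 by rewrite size_rcons.
rewrite inE /wreachable uNw uw; apply/existsP; exists (Ordinal size_qw).
apply/existsP; exists (in_tuple (rcons q w)).
by apply/and4P; split; rewrite //= ?last_rcons ?belast_rcons.
Qed.

Lemma mem_wreach_max u p q w :
  path e u p -> uniq (u :: p) -> size p <= r -> prefix q p ->
  w \in q -> ord_lt s u w -> {in q, forall x, ord_rank x <= ord_rank w} ->
  w \in wreach e r s u.
Proof.
move=> e_up uniq_up size_p /prefixP[q' pE] wq uw; subst p.
case/splitPr: wq e_up uniq_up size_p => q1 q2; rewrite -catA cat_cons -cat_rcons.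
rewrite cat_path -cat_cons cat_uniq size_cat size_rcons.
move=> /andP[e_uq1w _] /and3P[uniq_uq1w _ _] size_q w_max.
apply: (mem_wreach e_uq1w uniq_uq1w) => //; first lia.
have /andP[wNq1 _] : (w \notin q1) && uniq q1.
  by move: uniq_uq1w; rewrite /= rcons_uniq => /andP[_].
apply/allP => x xq1; rewrite ord_ltE ltn_neqAle (inj_eq ord_rank_inj).
rewrite w_max ?mem_cat ?xq1 // andbT.
by apply: contraNneq wNq1 => <-.
Qed.

Lemma exists_wreach_max u p q y :
  path e u p -> uniq (u :: p) -> size p <= r -> prefix q p ->
  y \in q -> ord_lt s u y ->
  exists w, [/\ w \in q, {in q, forall x, ord_rank x <= ord_rank w}
              & w \in wreach e r s u].
Proof.
move=> e_up uniq_up size_p qp yq uy.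
case: (@arg_maxnP _ y (fun x => x \in q) ord_rank yq) => w wq w_max.
exists w; split=> //; apply: (mem_wreach_max e_up uniq_up size_p qp wq _ w_max).
by move: uy; rewrite !ord_ltE; have := w_max y yq; lia.
Qed.

End WeakReach.

Lemma wcol_attained (V : finType) (e : rel V) r :
  exists s : {perm V}, wcol e r = \max_(u : V) #|wreach e r s u|.
Proof.
pose F (s : {perm V}) := \max_(u : V) #|wreach e r s u|.
have [s _ s_min] := @arg_minnP _ 1%g xpredT F isT.
exists s; apply/eqP; rewrite eqn_leq; apply/andP; split.
  rewrite /wcol; have : s \in index_enum {perm V} by rewrite mem_index_enum.
  elim: (index_enum _) => [//|s' ss IHss]; rewrite inE big_cons.
  case/predU1P => [->|/IHss]; first exact: geq_minl.
  exact: leq_trans (geq_minr _ _).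
apply: (big_ind (fun x => F s <= x)) => [|x y ? ?|s' _]; last exact: s_min.
  by apply/bigmax_leqP => u _; exact: max_card.
by rewrite leq_min; apply/andP.
Qed.

Section Gadget.
Variables (r n m : nat) (cl : 'I_m -> 'I_r -> 'I_n * bool).
Hypothesis r_gt2 : 2 < r.
Hypothesis cl_exact : exact_rsat cl.
Local Notation V := (GV r n m).
Local Notation edge := (Gedge cl).

Definition clause_vertex (i : 'I_m) (k : 'I_(2 * r)) : V := inl (inl (i, k)).
Definition literal_vertex (c : 'I_n * bool) : V := inl (inr c).
Definition negate (c : 'I_n * bool) : 'I_n * bool := (c.1, ~~ c.2).

(* For p = 0, ..., r, [spoke i l k t p] walks from the negation of the l-th
   literal of c_i, through that literal and copy t of its subdivided edge,
   to u_i^k. *)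
Definition spoke i l k t (p : nat) : V :=
  match p with
  | 0 => literal_vertex (negate (cl i l))
  | 1 => literal_vertex (cl i l)
  | p.+2 => if insub p is Some q then inr (i, l, k, t, q) else clause_vertex i k
  end.

Lemma literal_vertex_neq_negate c : literal_vertex c != literal_vertex (negate c).
Proof. by case: c => j b; apply/eqP => -[]; case: b. Qed.

Definition spoke_pos i l (x : V) : nat :=
  match x with
  | inl (inl _) => r
  | inl (inr c) => c == cl i l
  | inr (_, _, _, _, q) => q.+2
  end.

Definition clause_copy (x : V) : option 'I_(2 * r) :=
  match x with
  | inl (inl (_, k)) | inr (_, _, k, _, _) => Some k
  | _ => None
  end.

Definition in_gadget i l (x : V) : bool :=
  match x with
  | inl (inl _) => false
  | inl (inr c) => c.1 == (cl i l).1
  | inr (i', l', _, _, _) => (i' == i) && (l' == l)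
  end.

Section Spoke.
Variables (i : 'I_m) (l : 'I_r) (k : 'I_(2 * r)).

Lemma spoke_end t p : 1 < p -> r <= p -> spoke i l k t p = clause_vertex i k.
Proof. by case: p => [|[|p]] //= _ le_rp; case: insubP => //= q; lia. Qed.

Lemma spoke_edge t p : p < r -> edge (spoke i l k t p) (spoke i l k t p.+1).
Proof.
rewrite /Gedge; case: p => [|[|p]] lt_pr /=.
- by case: (cl i l) => j [] /=; rewrite eqxx.
- case: insubP => [q _ /= ->|]; last lia.
  by case: (cl i l) => j b; rewrite /= eqxx.
- case: insubP => [q _ qE|]; last lia.
  by case: insubP => [q' _ q'E|] /=; rewrite !eqxx ?andbT ?qE ?q'E //; lia.
Qed.

Lemma spokeK t p : p <= r -> spoke_pos i l (spoke i l k t p) = p.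
Proof.
case: p => [|[|p]] le_pr /=; rewrite ?eqxx //.
  by case: (cl i l) => j [] /=; rewrite xpair_eqE eqxx.
by case: insubP => [q _ /= ->|] //=; lia.
Qed.

Lemma uniq_map_spoke t ps :
  uniq ps -> {subset ps <= iota 0 r.+1} -> uniq (map (spoke i l k t) ps).
Proof.
move=> uniq_ps ps_le; rewrite map_inj_in_uniq // => p p' /ps_le + /ps_le.
rewrite !mem_iota => /andP[_ le_pr] /andP[_ le_p'r] /(congr1 (spoke_pos i l)).
by rewrite !spokeK.
Qed.

Lemma spoke_copies_meet p p' : 0 < p < r -> p' < r ->
  spoke i l k false p = spoke i l k true p' -> p = 1.
Proof.
move=> /andP[p_gt0 lt_pr] lt_p'r.
case: p p_gt0 lt_pr => [//|[_ _ _ //|p _ lt_pr /=]].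
case: insubP => [q _ _|]; last lia.
case: p' lt_p'r => [|[|p']] //= lt_p'r.
by case: insubP => [q' _ _ []|]; last lia.
Qed.

Definition spoke_to_clause t := map (spoke i l k t) (iota 2 r.-1).
Definition spoke_to_literal t := map (spoke i l k t) (rev (iota 1 r.-1)).

Lemma path_spoke_to_clause t :
  path edge (literal_vertex (cl i l)) (spoke_to_clause t).
Proof. by apply: (path_map_iota (a := 1)) => p lt_pr; apply: spoke_edge; lia. Qed.

Lemma uniq_spoke_to_clause t : uniq (literal_vertex (cl i l) :: spoke_to_clause t).
Proof.
apply: (@uniq_map_spoke t (iota 1 r.-1.+1)) => [|p]; first exact: iota_uniq.
by rewrite !mem_iota; lia.
Qed.

Lemma size_spoke_to_clause t : size (spoke_to_clause t) <= r.
Proof. by rewrite size_map size_iota; lia. Qed.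

Lemma clause_vertex_spoke_to_clause t : clause_vertex i k \in spoke_to_clause t.
Proof.
apply/mapP; exists r; last by rewrite spoke_end //; lia.
by rewrite mem_iota; lia.
Qed.

Lemma clause_copy_spoke_to_clause t x :
  x \in spoke_to_clause t -> clause_copy x = Some k.
Proof.
case/mapP=> p; rewrite mem_iota => /andP[p_gt1 _] ->.
by case: p p_gt1 => [|[|p]] //= _; case: insubP.
Qed.

Lemma spoke_to_literal_rcons t :
  rcons (spoke_to_literal t) (literal_vertex (negate (cl i l))) =
  map (spoke i l k t) (rev (iota 0 r)).
Proof.
have -> : iota 0 r = 0 :: iota 1 r.-1 by case: (r) r_gt2.
by rewrite rev_cons map_rcons.
Qed.

Lemma path_spoke_to_literal t :
  path edge (clause_vertex i k)
    (spoke_to_literal t ++ [:: literal_vertex (negate (cl i l))]).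
Proof.
rewrite cats1 spoke_to_literal_rcons -(@spoke_end t r) //; last lia.
apply: path_map_rev_iota => p lt_pr; rewrite /Gedge orbC; exact: spoke_edge.
Qed.

Lemma uniq_spoke_to_literal t :
  uniq (clause_vertex i k
          :: spoke_to_literal t ++ [:: literal_vertex (negate (cl i l))]).
Proof.
rewrite cats1 spoke_to_literal_rcons -(@spoke_end t r) //; last lia.
apply: (@uniq_map_spoke t (r :: rev (iota 0 r))) => [|p].
  by rewrite /= mem_rev mem_iota ltnn andbF rev_uniq iota_uniq.
by rewrite inE mem_rev !mem_iota; lia.
Qed.

Lemma size_spoke_to_literal t :
  size (spoke_to_literal t ++ [:: literal_vertex (negate (cl i l))]) <= r.
Proof. by rewrite size_cat size_map size_rev size_iota /=; lia. Qed.

Lemma literal_vertex_spoke_to_literal t :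
  literal_vertex (cl i l) \in spoke_to_literal t.
Proof. by apply/mapP; exists 1; rewrite // mem_rev mem_iota; lia. Qed.

Lemma in_gadget_spoke_to_literal t x :
  x \in spoke_to_literal t -> in_gadget i l x.
Proof.
case/mapP=> p; rewrite mem_rev mem_iota => /andP[_ lt_pr] ->.
case: p lt_pr => [|[|p]] lt_pr /=; rewrite ?eqxx //.
by case: insubP => [q _ _|] /=; rewrite ?eqxx //; lia.
Qed.

Lemma spoke_to_literal_meet x :
  x \in spoke_to_literal false -> x \in spoke_to_literal true ->
  x = literal_vertex (cl i l).
Proof.
case/mapP=> p; rewrite mem_rev mem_iota => p_range ->.
case/mapP=> p'; rewrite mem_rev mem_iota => p'_range /spoke_copies_meet -> //; lia.
Qed.

End Spoke.

Lemma in_gadget_inj i l l' x : in_gadget i l x -> in_gadget i l' x -> l = l'.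
Proof.
case: x => [[//|[j b]]|[[[[i' l0] _] _] _]] /=.
  by move=> /eqP jE /eqP; rewrite jE; apply: cl_exact.
by move=> /andP[_ /eqP <-] /andP[_ /eqP].
Qed.

Lemma literal_wreach_large s i l :
  (forall k, ord_lt s (literal_vertex (cl i l)) (clause_vertex i k)) ->
  2 * r <= #|wreach edge r s (literal_vertex (cl i l))|.
Proof.
move=> lit_first.
have /fin_all_exists[w w_spec] k : exists w,
    w \in spoke_to_clause i l k false /\ w \in wreach edge r s (literal_vertex (cl i l)).
  have [w [w_to _ w_reach]] := exists_wreach_max (path_spoke_to_clause i l k false)
    (uniq_spoke_to_clause i l k false) (size_spoke_to_clause i l k false) (prefix_refl _)
    (clause_vertex_spoke_to_clause i l k false) (lit_first k).
  by exists w.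
have w_copy k : clause_copy (w k) = Some k.
  by case: (w_spec k) => /clause_copy_spoke_to_clause.
rewrite -[2 * r]card_ord; apply: leq_card_into (fun k => (w_spec k).2) => k k' wE.
by move: (w_copy k); rewrite wE w_copy => -[].
Qed.

Lemma literal_wreach_pair s i k l :
  ord_lt s (clause_vertex i k) (literal_vertex (cl i l)) ->
  ord_lt s (literal_vertex (cl i l)) (literal_vertex (negate (cl i l))) ->
  exists g : bool -> V, injective g /\
    forall t, in_gadget i l (g t) && (g t \in wreach edge r s (clause_vertex i k)).
Proof.
move=> u_lit lit_neg; set u := clause_vertex i k.
set L := literal_vertex (cl i l); set L' := literal_vertex (negate (cl i l)).
have /fin_all_exists[w w_spec] t : exists w,
    [/\ w \in spoke_to_literal i l k t,
        {in spoke_to_literal i l k t, forall x, ord_rank s x <= ord_rank s w}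
      & w \in wreach edge r s u].
  exact: exists_wreach_max (path_spoke_to_literal i l k t)
    (uniq_spoke_to_literal i l k t) (size_spoke_to_literal i l k t) (prefix_prefix _ _)
    (literal_vertex_spoke_to_literal i l k t) u_lit.
have w_meet : w false = w true -> w false = L.
  case: (w_spec false) (w_spec true) => [w0 _ _] [w1 _ _] wE.
  by apply: (spoke_to_literal_meet w0); rewrite wE.
(* If both copies peak at L, then L' is reached through L instead. *)
have L'_reach : w false = L -> L' \in wreach edge r s u.
  case: (w_spec false) => _ w_max _ wL.
  apply: (mem_wreach_max (path_spoke_to_literal i l k false)
    (uniq_spoke_to_literal i l k false) (size_spoke_to_literal i l k false)
    (prefix_refl _)); rewrite ?mem_cat ?mem_seq1 ?eqxx ?orbT //.
  - exact: ltn_trans u_lit lit_neg.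
  - move=> x; rewrite mem_cat mem_seq1 => /orP[/w_max|/eqP -> //].
    by rewrite wL => /leq_ltn_trans/(_ lit_neg)/ltnW.
exists (fun t => if t && (w false == w true) then L' else w t); split.
  have g_ft : (if w false == w true then L' else w true) != w false.
    case: (w false =P w true) => [/w_meet ->|/eqP]; last by rewrite eq_sym.
    by rewrite eq_sym literal_vertex_neq_negate.
  by move=> [] [] //= /eqP; rewrite ?(negbTE g_ft) // eq_sym (negbTE g_ft).
move=> t; case: ifP => [/andP[_ /eqP/w_meet/L'_reach ->]|_].
  by rewrite /= eqxx.
by case: (w_spec t) => /in_gadget_spoke_to_literal -> _ ->.
Qed.

Lemma clause_wreach_large s i k :
  (forall l, ord_lt s (clause_vertex i k) (literal_vertex (cl i l))) ->
  (forall l, ord_lt s (literal_vertex (cl i l)) (literal_vertex (negate (cl i l)))) ->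
  2 * r <= #|wreach edge r s (clause_vertex i k)|.
Proof.
move=> u_first lit_lt.
have /fin_all_exists[g g_spec] l := literal_wreach_pair (u_first l) (lit_lt l).
have gs_inj : injective (fun lt : 'I_r * bool => g lt.1 lt.2).
  move=> [l t] [l' t'] /= gE.
  have ll' : l = l'.
    have [_ /(_ t)/andP[gl _]] := g_spec l; have [_ /(_ t')/andP[gl' _]] := g_spec l'.
    by apply: (in_gadget_inj gl); rewrite gE.
  by subst l'; rewrite ((g_spec l).1 _ _ gE).
have gs_reach (lt : 'I_r * bool) : g lt.1 lt.2 \in wreach edge r s (clause_vertex i k).
  by case: (g_spec lt.1) => _ /(_ lt.2)/andP[].
have := leq_card_into gs_inj gs_reach; rewrite card_prod card_ord card_bool; lia.
Qed.

Lemma satisfiable_of_small_wreach (s : {perm V}) :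
  (forall u, #|wreach edge r s u| < 2 * r) -> satisfiable cl.
Proof.
move=> small.
pose a j := ord_lt s (literal_vertex (j, false)) (literal_vertex (j, true)).
exists a => i.
case: (boolP [exists l, a (cl i l).1 == (cl i l).2]) => [/existsP[l /eqP]|/existsPn unsat].
  by exists l.
have lit_lt l : ord_lt s (literal_vertex (cl i l)) (literal_vertex (negate (cl i l))).
  move: (unsat l); case: (cl i l) => j [] /=; last by rewrite eqbF_neg negbK.
  by rewrite eqb_id ord_gtNlt // (literal_vertex_neq_negate (j, false)).
have r_gt0 : 0 < r by lia.
have [[l lit_first]|[k u_first]] := ord_lt_first_cases s (Ordinal r_gt0)
  (f := fun l => literal_vertex (cl i l)) (g := clause_vertex i) (fun _ _ => isT).
  by have := literal_wreach_large lit_first; have := small (literal_vertex (cl i l)); lia.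
have := clause_wreach_large u_first lit_lt.
by have := small (clause_vertex i k); lia.
Qed.

End Gadget.

Theorem lemma3p9 (r n m : nat) (cl : 'I_m -> 'I_r -> 'I_n * bool) :
  (3 <= r)%N -> exact_rsat cl ->
  (wcol (Gedge cl) r <= 2 * r - 1)%N -> satisfiable cl.
Proof.
move=> r_ge3 cl_exact wcol_le.
have [s wcolE] := wcol_attained (Gedge cl) r.
apply: (satisfiable_of_small_wreach r_ge3 (s := s) cl_exact) => u.
have := leq_bigmax (F := fun u => #|wreach (Gedge cl) r s u|) u.
by rewrite -wcolE; lia.
Qed.
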